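(* Let $e=(e_1,\dots,e_n)\in\mathbf{I}_n(201,210)$ have parameters $(p,q)$. Then there are exactly $p+q$ sequences $(e_1,\dots,e_n,k)\in\mathbf{I}_{n+1}(201,210)$, and their parameters are, as a multiset, $$(p,q+1),(p-1,q+2),\dots,(1,q+p),\ (p+1,q),\ \underbrace{(p+2,1),\dots,(p+2,1)}_{q-1}.$$
   Context: $\mathbf{I}_n=\{(e_1,\dots,e_n)\in\mathbb{N}^n:0\le e_i<i\}$. $\mathbf{I}_n(201,210)$ is the set of $e\in\mathbf{I}_n$ with no indices $i<j<k$ such that $e_j<e_k<e_i$ and no indices $i<j<k$ such that $e_i>e_j>e_k$. The parameters of $e\in\mathbf{I}_n(201,210)$ are $(p,q)$ where $p=|\{k>e_n:(e_1,\dots,e_n,k)\in\mathbf{I}_{n+1}(201,210)\}|$ and $q=|\{k\le e_n:(e_1,\dots,e_n,k)\in\mathbf{I}_{n+1}(201,210)\}|$. *)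

From mathcomp Require Import all_boot.
Set Implicit Arguments. Unset Strict Implicit. Unset Printing Implicit Defensive.

(* Sequences e = (e_1,...,e_n) are represented as s : seq nat with
   e_(i+1) = nth 0 s i (0-based positions). *)

Definition is_inv_seq (n : nat) (e : seq nat) : bool :=
  (size e == n) && [forall i : 'I_(size e), nth 0 e i < i.+1].

Definition contains201 (e : seq nat) : bool :=
  [exists i : 'I_(size e), exists j : 'I_(size e), exists k : 'I_(size e),
     [&& i < j, j < k, nth 0 e j < nth 0 e k & nth 0 e k < nth 0 e i]].

Definition contains210 (e : seq nat) : bool :=
  [exists i : 'I_(size e), exists j : 'I_(size e), exists k : 'I_(size e),
     [&& i < j, j < k, nth 0 e j < nth 0 e i & nth 0 e k < nth 0 e j]].

Definition in_I201_210 (n : nat) (e : seq nat) : bool :=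
  [&& is_inv_seq n e, ~~ contains201 e & ~~ contains210 e].

(* The children (e_1,...,e_n,k) in I_{n+1}(201,210), listed by increasing k.
   Every candidate k with (e,k) in I_{n+1} satisfies k < n+1, so ranging
   over iota 0 (size e).+1 loses nothing. *)
Definition children (e : seq nat) : seq (seq nat) :=
  [seq rcons e k | k <- iota 0 (size e).+1 & in_I201_210 (size e).+1 (rcons e k)].

Definition lastE (e : seq nat) : nat := last 0 e.

Definition param_p (e : seq nat) : nat :=
  count (fun k => (lastE e < k) && in_I201_210 (size e).+1 (rcons e k))
        (iota 0 (size e).+1).
Definition param_q (e : seq nat) : nat :=
  count (fun k => (k <= lastE e) && in_I201_210 (size e).+1 (rcons e k))
        (iota 0 (size e).+1).
Definition params (e : seq nat) : nat * nat := (param_p e, param_q e).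

From mathcomp Require Import all_boot zify.
Set Implicit Arguments. Unset Strict Implicit.

(* Let e be a nonempty sequence in I_n(201,210), with last entry L and
   maximum m (so L <= m < n).  Avoiding 201 and 210 means: two later entries
   lying below an earlier one are equal.  Hence a value k is a legal next
   entry iff k <= n and, for every pair i < j with e_j < e_i and k < e_i, we
   have e_j = k.  Consequently every k in [m, n] is legal, L is legal, and,
   when L < m, L is the only legal value below m (use the pair formed by a
   position of the maximum and the last position).  So the legal values are
   [low e ++ [m, n]], where [low e] lists the legal values below m, and
   [low e = [:: L]] when L < m.

   The theorem follows by comparing the
   two multisets in each case. *)

Definition pattern_free (s : seq nat) : Prop :=
  forall i j k, i < j -> j < k -> k < size s ->
  nth 0 s j < nth 0 s i -> nth 0 s k < nth 0 s i -> nth 0 s j = nth 0 s k.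

Lemma pattern_freeP s : ~~ contains201 s && ~~ contains210 s <-> pattern_free s.
Proof.
split.
- case/andP => no201 no210 i j k ij jk ks ji ki.
  have js : j < size s by lia.
  have i_lt : i < size s by lia.
  case: (ltngtP (nth 0 s j) (nth 0 s k)) => // jk_cmp; exfalso.
  + move/negP: no201; apply; apply/existsP; exists (Ordinal i_lt).
    apply/existsP; exists (Ordinal js); apply/existsP; exists (Ordinal ks).
    by rewrite /= ij jk jk_cmp ki.
  + move/negP: no210; apply; apply/existsP; exists (Ordinal i_lt).
    apply/existsP; exists (Ordinal js); apply/existsP; exists (Ordinal ks).
    by rewrite /= ij jk jk_cmp ji.
- move=> free; apply/andP; split; apply/negP =>
    /existsP [i /existsP [j /existsP [k /and4P [ij jk lt1 lt2]]]].
  + have := free i j k ij jk (ltn_ord k) (ltn_trans lt1 lt2) lt2; lia.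
  + have := free i j k ij jk (ltn_ord k) lt1 (ltn_trans lt2 lt1); lia.
Qed.

Lemma is_inv_seqP N s :
  is_inv_seq N s <-> size s = N /\ (forall i, i < size s -> nth 0 s i < i.+1).
Proof.
split.
- by case/andP => /eqP sz /forallP bnd; split=> // i lti; exact: (bnd (Ordinal lti)).
- case=> sz bnd; apply/andP; split; first exact/eqP.
  by apply/forallP => i; apply: bnd.
Qed.

Definition valid (e : seq nat) : bool := in_I201_210 (size e) e.
Definition child_ok (e : seq nat) (k : nat) : bool :=
  in_I201_210 (size e).+1 (rcons e k).

Definition compatible (e : seq nat) (k : nat) : Prop :=
  forall i j, i < j -> j < size e ->
  nth 0 e j < nth 0 e i -> k < nth 0 e i -> nth 0 e j = k.

Lemma validP e :
  valid e <-> (forall i, i < size e -> nth 0 e i < i.+1) /\ pattern_free e.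
Proof.
rewrite /valid /in_I201_210; split.
- by case/andP => /is_inv_seqP [_ bnd] /pattern_freeP.
- by case=> bnd free; apply/andP; split; [apply/is_inv_seqP | apply/pattern_freeP].
Qed.

Lemma pattern_free_rcons e k :
  pattern_free (rcons e k) <-> pattern_free e /\ compatible e k.
Proof.
split.
- move=> free; split.
  + move=> i j l ij jl ls; have := free i j l ij jl.
    rewrite size_rcons !nth_rcons ls.
    have -> : i < size e by lia. have -> : j < size e by lia.
    by apply; lia.
  + move=> i j ij js; have := free i j (size e) ij js.
    rewrite size_rcons !nth_rcons ltnn eqxx js.
    have -> : i < size e by lia.
    by apply.
- case=> free comp i j l ij jl; rewrite size_rcons !nth_rcons => ls.
  have -> : i < size e by lia. have -> : j < size e by lia.
  case: (ltnP l (size e)) => l_lt; first exact: free.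
  have -> : l == size e by lia.
  by move=> /= ji ki; apply: (comp i j ij _ ji ki); lia.
Qed.

Lemma child_okP e k : valid e -> child_ok e k <-> k <= size e /\ compatible e k.
Proof.
move=> /validP [bnd free]; rewrite /child_ok /in_I201_210; split.
- case/andP => /is_inv_seqP [_ bnd'] /pattern_freeP /pattern_free_rcons [_ comp].
  split=> //; have := bnd' (size e).
  by rewrite size_rcons nth_rcons ltnn eqxx; apply.
- case=> k_le comp; apply/andP; split; last first.
    by apply/pattern_freeP/pattern_free_rcons.
  apply/is_inv_seqP; split; first by rewrite size_rcons.
  move=> i; rewrite size_rcons nth_rcons => i_le.
  case: (ltnP i (size e)) => i_lt; first exact: bnd.
  have -> : i == size e by lia.
  lia.
Qed.

Lemma valid_rcons e k : child_ok e k -> valid (rcons e k).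
Proof. by rewrite /valid size_rcons. Qed.

Definition allowed (e : seq nat) : seq nat :=
  filter (child_ok e) (iota 0 (size e).+1).

Lemma children_allowed e : children e = map (rcons e) (allowed e).
Proof. by []. Qed.

Lemma param_p_allowed e : param_p e = count (fun k => lastE e < k) (allowed e).
Proof. by rewrite count_filter. Qed.

Lemma param_q_allowed e : param_q e = count (fun k => k <= lastE e) (allowed e).
Proof. by rewrite count_filter. Qed.

Definition maxE (e : seq nat) : nat := \max_(i < size e) nth 0 e i.

Lemma nth_le_maxE e i : i < size e -> nth 0 e i <= maxE e.
Proof. by move=> lti; apply: (leq_bigmax (Ordinal lti)). Qed.

Lemma maxE_attained e : 0 < size e -> exists2 i, i < size e & nth 0 e i = maxE e.
Proof.
move=> ne; have card_gt0 : 0 < #|'I_(size e)| by rewrite card_ord.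
rewrite /maxE; have [i ->] := eq_bigmax (fun i : 'I_(size e) => nth 0 e i) card_gt0; by exists i.
Qed.

Lemma maxE_rcons e k : maxE (rcons e k) = maxn (maxE e) k.
Proof.
rewrite /maxE size_rcons big_ord_recr /= nth_rcons ltnn eqxx; congr maxn.
by apply: eq_bigr => i _; rewrite nth_rcons ltn_ord.
Qed.

Lemma compatible_rcons e k k' :
  maxE e <= k -> compatible (rcons e k) k' <-> compatible e k'.
Proof.
move=> max_le; split=> comp i j ij js.
- have := comp i j ij; rewrite size_rcons !nth_rcons js.
  have -> : i < size e by lia.
  by apply; lia.
- rewrite size_rcons in js; rewrite !nth_rcons.
  have i_lt : i < size e by lia.
  rewrite i_lt; case: (ltnP j (size e)) => j_lt; first exact: comp.
  have -> : j == size e by lia.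
  by move=> /= ki; have := nth_le_maxE i_lt; lia.
Qed.

Lemma count_all_in (T : eqType) (P : pred T) (s : seq T) :
  {in s, forall x, P x} -> count P s = size s.
Proof. by move=> allP; rewrite -count_predT; apply: eq_in_count => x /allP ->. Qed.

Lemma count_none_in (T : eqType) (P : pred T) (s : seq T) :
  {in s, forall x, ~~ P x} -> count P s = 0.
Proof. by move=> noneP; rewrite -(count_pred0 s); apply: eq_in_count => x /noneP /negbTE. Qed.

Section ValidSequence.
Variable e : seq nat.
Hypothesis e_valid : valid e.
Hypothesis e_nonempty : 0 < size e.

Local Notation n := (size e).
Local Notation L := (lastE e).
Local Notation m := (maxE e).

Definition low : seq nat := filter (child_ok e) (iota 0 m).

Lemma lastE_nth : L = nth 0 e n.-1.
Proof. by rewrite /lastE -nth_last. Qed.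

(* Position bounds: L <= m < n, the latter since e_i < i (1-based). *)
Lemma last_le_max : L <= m.
Proof. by rewrite lastE_nth; apply: nth_le_maxE; lia. Qed.

Lemma max_lt_size : m < n.
Proof.
have [i i_lt <-] := maxE_attained e_nonempty.
by case/validP: e_valid => bnd _; have := bnd i i_lt; lia.
Qed.

Lemma child_ok_high k : m <= k -> k <= n -> child_ok e k.
Proof.
move=> max_le k_le; apply/child_okP => //; split=> // i j ij js _ ki.
by have := nth_le_maxE (ltn_trans ij js); lia.
Qed.

Lemma child_ok_last : child_ok e L.
Proof.
have free : pattern_free e by case/validP: e_valid.
apply/child_okP => //; split; first by have := max_lt_size; have := last_le_max; lia.
move=> i j ij js ji Li.
have [j_lt | j_ge] := ltnP j n.-1.
  by rewrite lastE_nth; apply: (free i j n.-1) => //; [lia | rewrite -lastE_nth].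
have j_eq : j = n.-1 by lia.
by rewrite j_eq lastE_nth.
Qed.

(* If the last entry is not the maximum, it is the only legal next entry
   below the maximum: the maximum and the last entry form the pair i < j. *)
Lemma child_ok_low k : L < m -> child_ok e k -> k < m -> k = L.
Proof.
move=> L_lt /child_okP [] // _ comp k_lt.
have [i i_lt max_i] := maxE_attained e_nonempty.
have i_last : i < n.-1.
  have : i != n.-1 by apply/eqP => i_eq; move: L_lt; rewrite lastE_nth -i_eq max_i ltnn.
  lia.
have last_lt : n.-1 < n by lia.
rewrite lastE_nth; symmetry; apply: (comp i n.-1 i_last last_lt); by rewrite max_i -?lastE_nth.
Qed.

Lemma low_lt k : k \in low -> k < m.
Proof. by rewrite mem_filter mem_iota => /andP [_ /andP [_ k_lt]]. Qed.

Lemma allowed_prefix k : m <= k -> k <= n.+1 ->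
  filter (child_ok e) (iota 0 k) = low ++ iota m (k - m).
Proof.
move=> max_le k_le; rewrite -{1}(subnKC max_le) iotaD filter_cat add0n.
congr (_ ++ _); apply/all_filterP/allP => x; rewrite mem_iota => /andP [x_ge x_lt].
by apply: child_ok_high; lia.
Qed.

Lemma allowed_split : allowed e = low ++ iota m (n.+1 - m).
Proof. by apply: allowed_prefix; have := max_lt_size; lia. Qed.

Lemma low_below_max : L < m -> low = [:: L].
Proof.
move=> L_lt; rewrite /low (@eq_in_filter _ _ (pred1 L)).
  by rewrite filter_pred1_uniq ?iota_uniq // mem_iota.
move=> k; rewrite mem_iota => /andP [_ k_lt] /=.
by apply/idP/eqP => [ok | ->]; [exact: child_ok_low | exact: child_ok_last].
Qed.

Lemma params_below_max : L < m -> params e = (n.+1 - m, 1).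
Proof.
move=> L_lt; rewrite /params param_p_allowed param_q_allowed.
rewrite allowed_split low_below_max //= ltnn leqnn count_all_in ?size_iota.
  by rewrite count_none_in // => k; rewrite mem_iota; lia.
by move=> k; rewrite mem_iota; lia.
Qed.

Lemma params_at_max : L = m -> params e = (n - m, size low + 1).
Proof.
move=> L_eq; rewrite /params param_p_allowed param_q_allowed allowed_split L_eq.
have -> : n.+1 - m = (n - m).+1 by have := max_lt_size; lia.
rewrite /= !count_cat /= ltnn leqnn (count_none_in (s := low)); last first.
  by move=> k /low_lt; lia.
rewrite (count_all_in (s := low)); last by move=> k /low_lt; lia.
rewrite count_all_in ?count_none_in ?size_iota //.
- by move=> k; rewrite mem_iota; lia.
- by move=> k; rewrite mem_iota; lia.
Qed.

End ValidSequence.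

Lemma map_iota_succ (T : Type) (f : nat -> T) p :
  [seq f i | i <- iota 0 p.+1] = f 0 :: [seq f i.+1 | i <- iota 0 p].
Proof. by rewrite /= -[1]/(1 + 0) iotaDl -map_comp. Qed.

Section Children.
Variable e : seq nat.
Hypothesis e_valid : valid e.
Hypothesis e_nonempty : 0 < size e.

Local Notation n := (size e).
Local Notation m := (maxE e).

Lemma child_ok_rcons k k' : m <= k -> k <= n -> k' <= n ->
  child_ok (rcons e k) k' = child_ok e k'.
Proof.
move=> max_le k_le k'_le.
have rcons_valid := valid_rcons (child_ok_high e_valid e_nonempty max_le k_le).
apply/idP/idP.
- case/(child_okP k' rcons_valid) => _ /(compatible_rcons _ max_le) comp.
  exact/(child_okP k' e_valid).
- case/(child_okP k' e_valid) => _ /(compatible_rcons _ max_le) comp.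
  by apply/(child_okP k' rcons_valid); rewrite size_rcons; split; first lia.
Qed.

(* A legal entry below the maximum: the child has maximum m and a smaller
   last entry, so its parameters are (n+2-m, 1). *)
Lemma params_child_low k : k \in low e -> params (rcons e k) = (n.+2 - m, 1).
Proof.
move=> k_low; have k_lt := low_lt k_low.
have ok : child_ok e k by move: k_low; rewrite mem_filter => /andP [].
have max_child : maxE (rcons e k) = m by rewrite maxE_rcons (maxn_idPl (ltnW k_lt)).
have last_child : lastE (rcons e k) = k by rewrite /lastE last_rcons.
by rewrite params_below_max ?valid_rcons ?size_rcons ?max_child ?last_child.
Qed.

(* A value k in [m, n]: the child has k as maximum and last entry, and its
   legal entries below k are those of e. *)
Lemma params_child_high k : m <= k -> k <= n ->
  params (rcons e k) = (n.+1 - k, size (low e) + (k - m).+1).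
Proof.
move=> max_le k_le; have ok := child_ok_high e_valid e_nonempty max_le k_le.
have max_child : maxE (rcons e k) = k by rewrite maxE_rcons (maxn_idPr max_le).
have last_child : lastE (rcons e k) = k by rewrite /lastE last_rcons.
rewrite params_at_max ?valid_rcons ?size_rcons ?max_child ?last_child //.
congr pair; rewrite {1}/low max_child.
rewrite (@eq_in_filter _ _ (child_ok e)); last first.
  by move=> k'; rewrite mem_iota => /andP [_ k'_lt]; apply: child_ok_rcons; lia.
by rewrite (allowed_prefix e_valid e_nonempty max_le) ?size_cat ?size_iota; lia.
Qed.

Lemma children_params : map params (children e) =
  nseq (size (low e)) (n.+2 - m, 1) ++
  [seq (n.+1 - m - i, size (low e) + i.+1) | i <- iota 0 (n.+1 - m)].
Proof.
rewrite children_allowed (allowed_split e_valid e_nonempty) -map_comp map_cat.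
congr (_ ++ _).
  rewrite -(size_map (params \o rcons e)).
  by apply/all_pred1P/allP => _ /mapP [k k_low ->]; apply/eqP/params_child_low.
have -> : iota m (n.+1 - m) = map (addn m) (iota 0 (n.+1 - m)) by rewrite -iotaDl addn0.
rewrite -map_comp; apply/eq_in_map => i; rewrite mem_iota => /andP [_ i_lt] /=.
rewrite params_child_high; try lia.
congr pair; lia.
Qed.

End Children.

Theorem lemma4p5 (n : nat) (e : seq nat) :
  0 < n -> in_I201_210 n e ->
  let p := param_p e in
  let q := param_q e in
  size (children e) = p + q /\
  perm_eq (map params (children e))
    ([seq (p - i, q + 1 + i) | i <- iota 0 p]
       ++ (p.+1, q) :: nseq (q - 1) (p + 2, 1)).
Proof.
move=> n_gt0 e_in; cbv zeta.
have e_size : size e = n by case/and3P: e_in => /is_inv_seqP [].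
have e_valid : valid e by rewrite /valid e_size.
have e_nonempty : 0 < size e by rewrite e_size.
have max_lt := max_lt_size e_valid e_nonempty.
have size_children : size (children e) = size (low e) + ((size e).+1 - maxE e).
  by rewrite -(size_map params) children_params // size_cat size_nseq size_map size_iota.
rewrite size_children children_params //.
have [L_lt | L_ge] := ltnP (lastE e) (maxE e).
- case: (params_below_max e_valid e_nonempty L_lt) => -> ->.
  rewrite low_below_max //=; split; first lia.
  have -> : (size e).+2 - maxE e = ((size e).+1 - maxE e).+1 by lia.
  by rewrite cats1 perm_sym perm_rcons.
- have L_eq : lastE e = maxE e by have := last_le_max e_valid e_nonempty; lia.
  case: (params_at_max e_valid e_nonempty L_eq) => -> ->.
  split; first lia.
  have -> : (size e).+1 - maxE e = (size e - maxE e).+1 by lia.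
  have -> : (size e).+2 - maxE e = size e - maxE e + 2 by lia.
  rewrite map_iota_succ addnK subn0.
  set p := size e - maxE e; set s := size (low e).
  have -> : [seq (p.+1 - i.+1, s + i.+2) | i <- iota 0 p] =
            [seq (p - i, s + 1 + 1 + i) | i <- iota 0 p].
    by apply: eq_map => i; congr pair; lia.
  by apply/permP => x; rewrite !count_cat /=; lia.
Qed.
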